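(* Let $\bm{r}_i=(r_{1i},\ldots,r_{ni})^{T}\in\mathbb{R}^{n}$ and $w_i\in\mathbb{R}$ for $i=1,\ldots,m$. For each $j=1,\ldots,n$ let $$p_j=\max(r_{j1}+w_1,\ldots,r_{jm}+w_m),\qquad q_j=\min(r_{j1}-w_1,\ldots,r_{jm}-w_m).$$ Then $$\min_{\bm{x}\in\mathbb{R}^{n}}\max_{1\le i\le m}\big(\rho(\bm{r}_i,\bm{x})+w_i\big)=\Delta:=\tfrac12\max(p_1-q_1,\ldots,p_n-q_n),$$ where $\rho(\bm{x},\bm{y})=\max_{1\le j\le n}|x_j-y_j|$ is the Chebyshev distance, and the minimum is attained at every vector $\bm{x}=(x_j)$ with $p_j-\Delta\le x_j\le q_j+\Delta$ for all $j=1,\ldots,n$. *)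

From mathcomp Require Import all_boot all_order all_algebra.
Set Implicit Arguments. Unset Strict Implicit. Unset Printing Implicit Defensive.
Import Order.TTheory GRing.Theory Num.Theory.
Local Open Scope ring_scope.

(* Maximum / minimum of a finite nonempty family indexed by 'I_k.
   For k = 0 the value is an irrelevant default (0); all uses below
   are under the hypothesis that the index type is nonempty. *)
Definition fmax (R : realDomainType) (k : nat) (F : 'I_k -> R) : R :=
  let s := [seq F i | i <- enum 'I_k] in foldr Num.max (head 0 s) (behead s).

Definition fmin (R : realDomainType) (k : nat) (F : 'I_k -> R) : R :=
  let s := [seq F i | i <- enum 'I_k] in foldr Num.min (head 0 s) (behead s).

Definition cheb (R : realDomainType) (n : nat) (a b : 'cV[R]_n) : R :=
  fmax (fun j : 'I_n => `|a j 0 - b j 0|).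

(* The lower bound comes from a single coordinate j realising the maximum of
   p_j - q_j: if p_j = r_{j i1} + w_{i1} and q_j = r_{j i2} - w_{i2}, the
   triangle inequality through x_j gives
   p_j - q_j <= (|r_{j i1} - x_j| + w_{i1}) + (|r_{j i2} - x_j| + w_{i2}) <= 2 f(x).
   Conversely, on the box p_j - Delta <= x_j <= q_j + Delta every term
   |r_{j i} - x_j| + w_i is at most Delta, and the box is nonempty because
   it contains the midpoints (p_j + q_j) / 2. *)
From mathcomp Require Import all_boot all_order all_algebra.
From mathcomp Require Import lra.
Set Implicit Arguments. Unset Strict Implicit. Unset Printing Implicit Defensive.
Import Order.TTheory GRing.Theory Num.Theory.
Local Open Scope ring_scope.

Section FoldExtrema.
Variable R : realDomainType.
Implicit Types (a x : R) (t : seq R).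

Lemma foldr_max_ub a t x : x \in a :: t -> x <= foldr Num.max a t.
Proof.
elim: t a x => [|b t IH] a x /=; first by rewrite inE => /eqP ->.
rewrite !inE le_max => /or3P [/eqP ->|/eqP ->|xt].
- by rewrite IH ?mem_head ?orbT.
- by rewrite lexx.
- by rewrite IH ?orbT // inE xt orbT.
Qed.

Lemma foldr_max_mem a t : foldr Num.max a t \in a :: t.
Proof.
elim: t => [|b t IH] /=; first exact: mem_head.
rewrite maxEle; case: ifP => _; last by rewrite !inE eqxx orbT.
by move: IH; rewrite !inE => /orP [->|->]; rewrite ?orbT.
Qed.

Lemma foldr_min_lb a t x : x \in a :: t -> foldr Num.min a t <= x.
Proof.
elim: t a x => [|b t IH] a x /=; first by rewrite inE => /eqP ->.
rewrite !inE ge_min => /or3P [/eqP ->|/eqP ->|xt].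
- by rewrite IH ?mem_head ?orbT.
- by rewrite lexx.
- by rewrite IH ?orbT // inE xt orbT.
Qed.

Lemma foldr_min_mem a t : foldr Num.min a t \in a :: t.
Proof.
elim: t => [|b t IH] /=; first exact: mem_head.
rewrite minEle; case: ifP => _; first by rewrite !inE eqxx orbT.
by move: IH; rewrite !inE => /orP [->|->]; rewrite ?orbT.
Qed.

Variables (k : nat) (F : 'I_k -> R).

Let image_enum_neq0 : (0 < k)%N -> [seq F i | i <- enum 'I_k] != [::].
Proof. by move=> hk; rewrite -size_eq0 size_map size_enum_ord -lt0n. Qed.

Let image_enumP y : y \in [seq F i | i <- enum 'I_k] -> exists i, y = F i.
Proof. by move=> /mapP [i _ ->]; exists i. Qed.

Let mem_image_enum i : F i \in [seq F i | i <- enum 'I_k].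
Proof. by apply: map_f; rewrite mem_enum. Qed.

Lemma fmax_ge i : F i <= fmax F.
Proof.
rewrite /fmax; move: (mem_image_enum i).
by case: [seq F i | i <- enum 'I_k] => [|a t] //=; apply: foldr_max_ub.
Qed.

Lemma fmax_attained : (0 < k)%N -> exists i, fmax F = F i.
Proof.
move=> /image_enum_neq0; rewrite /fmax; move: image_enumP.
case: [seq F i | i <- enum 'I_k] => [|a t] //= memP _.
exact/memP/foldr_max_mem.
Qed.

Lemma fmax_le c : (0 < k)%N -> (forall i, F i <= c) -> fmax F <= c.
Proof. by move=> /fmax_attained [i ->]. Qed.

Lemma fmin_le i : fmin F <= F i.
Proof.
rewrite /fmin; move: (mem_image_enum i).
by case: [seq F i | i <- enum 'I_k] => [|a t] //=; apply: foldr_min_lb.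
Qed.

Lemma fmin_attained : (0 < k)%N -> exists i, fmin F = F i.
Proof.
move=> /image_enum_neq0; rewrite /fmin; move: image_enumP.
case: [seq F i | i <- enum 'I_k] => [|a t] //= memP _.
exact/memP/foldr_min_mem.
Qed.

End FoldExtrema.

Lemma cheb_ge (R : realDomainType) n (a b : 'cV[R]_n) j :
  `|a j 0 - b j 0| <= cheb a b.
Proof. exact: (fmax_ge (fun j : 'I_n => `|a j 0 - b j 0|)). Qed.

Section WeightedChebyshevCenter.
Variables (R : realFieldType) (n m : nat) (r : 'M[R]_(n, m)) (w : 'I_m -> R).
Hypotheses (hn : (0 < n)%N) (hm : (0 < m)%N).

Definition upper_env (j : 'I_n) : R := fmax (fun i : 'I_m => r j i + w i).
Definition lower_env (j : 'I_n) : R := fmin (fun i : 'I_m => r j i - w i).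
Definition cheb_radius : R := fmax (fun j : 'I_n => upper_env j - lower_env j) / 2.
Definition weighted_cheb (x : 'cV[R]_n) : R :=
  fmax (fun i : 'I_m => cheb (col i r) x + w i).

Lemma weighted_cheb_ge (x : 'cV[R]_n) i j : `|r j i - x j 0| + w i <= weighted_cheb x.
Proof.
have := fmax_ge (fun i => cheb (col i r) x + w i) i.
have := cheb_ge (col i r) x j; rewrite mxE /weighted_cheb; lra.
Qed.

Lemma cheb_radius_le_weighted_cheb (x : 'cV[R]_n) : cheb_radius <= weighted_cheb x.
Proof.
rewrite /cheb_radius; have [j ->] := fmax_attained (fun j => upper_env j - lower_env j) hn.
have [i1 p_def] := fmax_attained (fun i => r j i + w i) hm.
have [i2 q_def] := fmin_attained (fun i => r j i - w i) hm.
rewrite /upper_env /lower_env p_def q_def /=.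
have := weighted_cheb_ge x i1 j; have := weighted_cheb_ge x i2 j.
have := ler_norm (r j i1 - x j 0); have := ler_norm (x j 0 - r j i2).
rewrite distrC; lra.
Qed.

Lemma weighted_cheb_le_radius (x : 'cV[R]_n) :
  (forall j, upper_env j - cheb_radius <= x j 0 <= lower_env j + cheb_radius) ->
  weighted_cheb x <= cheb_radius.
Proof.
move=> box; apply: fmax_le => // i; rewrite -lerBrDr.
apply: fmax_le => // j; rewrite !mxE ler_norml.
have /andP [pj_le qj_ge] := box j.
have := fmax_ge (fun i => r j i + w i) i; have := fmin_le (fun i => r j i - w i) i.
rewrite /upper_env /lower_env /= in pj_le qj_ge *.
by move=> ? ?; apply/andP; split; lra.
Qed.

Lemma midpoint_in_box j :
  let x : 'cV[R]_n := \col_k ((upper_env k + lower_env k) / 2) in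
  upper_env j - cheb_radius <= x j 0 <= lower_env j + cheb_radius.
Proof.
rewrite /= mxE /cheb_radius.
have := fmax_ge (fun j => upper_env j - lower_env j) j => /= ?.
by apply/andP; split; lra.
Qed.

End WeightedChebyshevCenter.

Theorem corollary2 (R : realFieldType) (n m : nat) (hn : (0 < n)%N) (hm : (0 < m)%N)
    (r : 'M[R]_(n, m)) (w : 'I_m -> R) :
  let p := fun j : 'I_n => fmax (fun i : 'I_m => r j i + w i) in
  let q := fun j : 'I_n => fmin (fun i : 'I_m => r j i - w i) in
  let Delta := (fmax (fun j : 'I_n => p j - q j)) / 2 in
  let f := fun x : 'cV[R]_n => fmax (fun i : 'I_m => cheb (col i r) x + w i) in
  [/\ (forall x : 'cV[R]_n, Delta <= f x),
      (exists x : 'cV[R]_n, f x = Delta) &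
      (forall x : 'cV[R]_n,
         (forall j : 'I_n, p j - Delta <= x j 0 <= q j + Delta) -> f x = Delta)].
Proof.
move=> p q Delta f.
have lower x : Delta <= f x := cheb_radius_le_weighted_cheb r w hn hm x.
have optimal (x : 'cV[R]_n) : (forall j, p j - Delta <= x j 0 <= q j + Delta) -> f x = Delta.
  move=> box; apply/le_anti; rewrite lower andbT.
  exact: (weighted_cheb_le_radius hn hm box).
split=> //; exists (\col_j ((p j + q j) / 2)).
exact/optimal/(midpoint_in_box r w).
Qed.
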